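(* For the binary tree-shifts $X_{16}=(C,E)$ and $X_{18}=(C,G)$, the limit $h_{PS}$ exists and $$h_{PS}(X_{16})=h_{PS}(X_{18})=\frac14\sum_{n=2}^\infty\frac{1}{2^n}\log\operatorname{Fib}(n+1),$$ i.e. one quarter of $h_{PS}((A,D))$, where $(\operatorname{Fib}(m))_{m\ge1}=(1,1,2,3,5,\dots)$ is the Fibonacci sequence.
   Context: Binary tree-shifts: $k=2$, directions $a_1,a_2$, alphabet $\{0,1\}$; $(P,Q)$ is the set of trees $t:\{a_1,a_2\}^*\to\{0,1\}$ with $P_{t_x,t_{xa_1}}=1$, $Q_{t_x,t_{xa_2}}=1$ for all nodes $x$. Matrices: $A=\begin{pmatrix}1&1\\1&1\end{pmatrix}$, $C=\begin{pmatrix}0&1\\1&0\end{pmatrix}$, $D=\begin{pmatrix}1&1\\1&0\end{pmatrix}$, $E=\begin{pmatrix}1&0\\1&1\end{pmatrix}$, $G=\begin{pmatrix}1&1\\0&1\end{pmatrix}$. $p(n)$ is the number of allowed blocks of length $n$ (labellings $t|_{\Delta_n}$, $\Delta_n$ the words of length $\le n$), and $h_{PS}=\lim_{n\to\infty}\frac{\log p(n)}{1+2+\cdots+2^n}$. *)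

From HB Require Import structures.
From mathcomp Require Import all_boot all_order all_algebra.
From mathcomp Require Import all_classical all_reals all_analysis.
Set Implicit Arguments. Unset Strict Implicit. Unset Printing Implicit Defensive.
Import Order.TTheory GRing.Theory Num.Theory.

(* Alphabet {0,1} = 'I_2.  Directions a_1, a_2 are encoded by false, true;
   a node x of the tree is a word in seq bool, and x a_1 = rcons x false,
   x a_2 = rcons x true. *)
Definition alph := 'I_2.
Definition node := seq bool.
Definition tree := node -> alph.

Definition mx2 (a b c d : nat) : 'M[nat]_2 :=
  \matrix_(i < 2, j < 2)
    if val i == 0%N then (if val j == 0%N then a else b)
    else (if val j == 0%N then c else d).

Definition matrix_A : 'M[nat]_2 := mx2 1 1 1 1.
Definition matrix_C : 'M[nat]_2 := mx2 0 1 1 0.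
Definition matrix_D : 'M[nat]_2 := mx2 1 1 1 0.
Definition matrix_E : 'M[nat]_2 := mx2 1 0 1 1.
Definition matrix_G : 'M[nat]_2 := mx2 1 1 0 1.

Definition in_treeshift (P Q : 'M[nat]_2) (t : tree) : Prop :=
  forall x : node,
    P (t x) (t (rcons x false)) = 1%N /\ Q (t x) (t (rcons x true)) = 1%N.

Definition Delta (n : nat) : finType := {k : 'I_n.+1 & k.-tuple bool}.
Definition word_of {n} (w : Delta n) : node := tval (tagged w).

Definition allowed_block (P Q : 'M[nat]_2) (n : nat) (f : {ffun Delta n -> alph}) : Prop :=
  exists t : tree, in_treeshift P Q t /\ forall w : Delta n, f w = t (word_of w).

Definition pblocks (P Q : 'M[nat]_2) (n : nat) : nat :=
  #|[set f : {ffun Delta n -> alph} | `[< @allowed_block P Q n f >] ]|.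

Definition hPS_seq (R : realType) (P Q : 'M[nat]_2) (n : nat) : R :=
  ln ((pblocks P Q n)%:R : R) / ((\sum_(k < n.+1) 2 ^ k)%N)%:R.

(* Fibonacci: fib 1 = fib 2 = 1, fib 3 = 2, ... *)
Fixpoint fib (n : nat) : nat :=
  match n with
  | 0 => 0
  | 1 => 1
  | (m.+1 as k).+1 => fib k + fib m
  end.

(* A block of height n is determined by its labels on Delta_n, so when every
   symbol has a successor in both directions, p(n) is the number of admissible
   labelled complete binary trees of depth n.  Counting them by root label gives
   a_(n+1) = a_n b_n and b_(n+1) = a_n (a_n + b_n) for (C,E) (and the same with
   the labels exchanged for (C,G)), hence b_n / a_n = Fib(n+2) / Fib(n+1) and
   ln a_(n+1) = 2 ln a_n + ln Fib(n+2) - ln Fib(n+1).  Unrolling,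
   ln a_n / 2^n = S_(n+1) - S_n / 2 for the partial sums S_N of the series,
   while ln p(n) - ln a_n = ln (Fib(n+3) / Fib(n+1)) stays bounded; dividing by
   |Delta_n| = 2^(n+1) - 1 gives the limit L / 4. *)

From HB Require Import structures.
From mathcomp Require Import all_boot all_order all_algebra.
From mathcomp Require Import all_classical all_reals all_analysis.
From mathcomp Require Import zify ring lra.
Import Order.TTheory GRing.Theory Num.Theory.
Import numFieldNormedType.Exports.
Set Implicit Arguments. Unset Strict Implicit.

Local Open Scope set_scope.

Section Patterns.
Variables P Q : 'M[nat]_2.

(* A pattern of depth [n] is a labelling of [Delta n], stored as a complete
   binary tree of depth [n]. *)
Fixpoint pattern (n : nat) : finType :=
  if n is m.+1 then (alph * pattern m * pattern m)%type else alph.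

Definition pattern_root n : pattern n -> alph :=
  if n is m.+1 then fun t => t.1.1 else id.

Fixpoint admissible n : pattern n -> bool :=
  if n is m.+1 then fun t =>
    [&& P t.1.1 (pattern_root t.1.2) == 1, Q t.1.1 (pattern_root t.2) == 1,
        admissible t.1.2 & admissible t.2]
  else fun=> true.

Fixpoint pattern_of n (t : tree) : pattern n :=
  if n is m.+1 then
    (t [::], pattern_of m (fun w => t (false :: w)),
             pattern_of m (fun w => t (true :: w)))
  else t [::].

Lemma pattern_root_of n t : pattern_root (pattern_of n t) = t [::].
Proof. by case: n. Qed.

Lemma in_treeshift_cons t b :
  in_treeshift P Q t -> in_treeshift P Q (fun w => t (b :: w)).
Proof. by move=> h x; apply: (h (b :: x)). Qed.

Lemma admissible_pattern_of n t : in_treeshift P Q t -> admissible (pattern_of n t).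
Proof.
elim: n t => [|n IH] t //= ht; rewrite !pattern_root_of.
have [-> ->] := ht [::].
by rewrite !IH //; apply: in_treeshift_cons.
Qed.

Definition root_count n (c : alph) : nat :=
  \sum_(t : pattern n) (admissible t && (pattern_root t == c)).

Lemma sum_alph (F : alph -> nat) : \sum_c F c = F ord0 + F ord_max.
Proof. by rewrite big_ord_recl big_ord1; congr (_ + F _); apply: val_inj. Qed.

Lemma card_admissible n :
  #|[set t : pattern n | admissible t]| = root_count n ord0 + root_count n ord_max.
Proof.
rewrite -sum_alph /root_count exchange_big /= -sum1_card big_mkcond /=.
apply: eq_bigr => t _; rewrite inE (bigD1 (pattern_root t)) //= eqxx andbT.
rewrite big1 ?addn0; first by case: (admissible t).
by move=> d /negbTE hd; rewrite eq_sym hd andbF.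
Qed.

Lemma root_count0 c : root_count 0 c = 1.
Proof.
rewrite /root_count (bigD1 c) //= eqxx big1 // => d hd.
by rewrite (negbTE hd).
Qed.

Lemma sum_weighted_root n (w : alph -> bool) :
  \sum_(t : pattern n) (w (pattern_root t) && admissible t) =
  \sum_d w d * root_count n d.
Proof.
under [RHS]eq_bigr do rewrite big_distrr /=.
rewrite exchange_big /=; apply: eq_bigr => t _.
rewrite (bigD1 (pattern_root t)) //= eqxx andbT big1 ?addn0.
  by case: (w _); case: (admissible t).
by move=> d /negbTE hd; rewrite eq_sym hd andbF muln0.
Qed.

Lemma sum_pair (A B : finType) (F : A * B -> nat) :
  \sum_(x : A * B) F x = \sum_a \sum_b F (a, b).
Proof. by rewrite pair_big; apply: eq_bigr => -[]. Qed.

Lemma root_countS n c : root_count n.+1 c =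
  (\sum_d (P c d == 1) * root_count n d) * (\sum_d (Q c d == 1) * root_count n d).
Proof.
rewrite -!sum_weighted_root big_distrlr /= /root_count !sum_pair /=.
rewrite (bigD1 c) //= [X in _ + X]big1 ?addn0.
  apply: eq_bigr => l _; apply: eq_bigr => r _; rewrite eqxx andbT.
  by case: (P c _ == 1); case: (Q c _ == 1); case: (admissible l); case: (admissible r).
move=> a ha; apply: big1 => l _; apply: big1 => r _.
by rewrite (negbTE ha) andbF.
Qed.

End Patterns.

Section Extension.
Variables (P Q : 'M[nat]_2) (nextP nextQ : alph -> alph).
Hypotheses (nextPP : forall c, P c (nextP c) = 1) (nextQP : forall c, Q c (nextQ c) = 1).

Definition successor (c : alph) (b : bool) : alph := if b then nextQ c else nextP c.

(* Below depth [n], a leaf is continued by the successor functions. *)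
Fixpoint pattern_label n : pattern n -> node -> alph :=
  if n is m.+1 then fun t w =>
    if w is b :: w' then pattern_label (if b then t.2 else t.1.2) w' else t.1.1
  else fun a w => foldl successor a w.

Lemma pattern_label_nil n (t : pattern n) : pattern_label t [::] = pattern_root t.
Proof. by case: n t. Qed.

Lemma in_treeshift_pattern_label n (t : pattern n) :
  admissible P Q t -> in_treeshift P Q (pattern_label t).
Proof.
elim: n t => [|n IH] t.
  by move=> _ x /=; rewrite !foldl_rcons.
case: t => [[a l] r] /and4P[/eqP hl /eqP hr al ar] [|[] x] /=.
- by rewrite !pattern_label_nil.
- exact: (IH r ar).
- exact: (IH l al).
Qed.

Lemma pattern_label_of n (t : tree) w : size w <= n -> pattern_label (pattern_of n t) w = t w.
Proof.
elim: n t w => [|n IH] t [|b w] //; rewrite ltnS => hw /=.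
by case: b; rewrite IH.
Qed.

Lemma pattern_label_inj n (t1 t2 : pattern n) :
  (forall w, size w <= n -> pattern_label t1 w = pattern_label t2 w) -> t1 = t2.
Proof.
elim: n t1 t2 => [|n IH] t1 t2 h; first exact: (h [::] isT).
case: t1 t2 h => [[a1 l1] r1] [[a2 l2] r2] h.
have /= -> := h [::] isT.
rewrite (IH l1 l2) => [|w hw]; last exact: (h (false :: w)).
by rewrite (IH r1 r2) => // w hw; exact: (h (true :: w)).
Qed.

Lemma size_word_of n (d : Delta n) : size (word_of d) <= n.
Proof. by case: d => k w; rewrite /word_of size_tuple -ltnS. Qed.

Lemma word_ofP n w : size w <= n -> exists d : Delta n, word_of d = w.
Proof.
rewrite -ltnS => hw.
by exists (existT (fun k : 'I_n.+1 => k.-tuple bool) (Ordinal hw) (in_tuple w)).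
Qed.

Definition block_of_pattern n (t : pattern n) : {ffun Delta n -> alph} :=
  [ffun d => pattern_label t (word_of d)].

Lemma block_of_pattern_inj n : injective (@block_of_pattern n).
Proof.
move=> t1 t2 /ffunP h; apply: pattern_label_inj => w /word_ofP[d <-].
by have := h d; rewrite !ffunE.
Qed.

Lemma pblocks_card_admissible_succ n :
  pblocks P Q n = #|[set t : pattern n | admissible P Q t]|.
Proof.
rewrite /pblocks -(card_imset _ (@block_of_pattern_inj n)).
apply: eq_card => f; rewrite inE; apply/asboolP/imsetP.
  case=> t [ht hf]; exists (pattern_of n t); first by rewrite inE admissible_pattern_of.
  by apply/ffunP => d; rewrite ffunE hf pattern_label_of // size_word_of.
case=> t; rewrite inE => t_adm ->; exists (pattern_label t); split.
  exact: in_treeshift_pattern_label.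
by move=> d; rewrite ffunE.
Qed.

End Extension.

(* The hypotheses make every admissible pattern the restriction of a point of
   the tree-shift. *)
Lemma pblocks_card_admissible (P Q : 'M[nat]_2) n :
  (forall c, exists d, P c d = 1) -> (forall c, exists d, Q c d = 1) ->
  pblocks P Q n = #|[set t : pattern n | admissible P Q t]|.
Proof.
move=> /boolp.choice[nextP nextPP] /boolp.choice[nextQ nextQP].
exact: pblocks_card_admissible_succ nextPP nextQP n.
Qed.

Lemma mx2_rows a b c d : (a == 1) || (b == 1) -> (c == 1) || (d == 1) ->
  forall i, exists j, mx2 a b c d i j = 1.
Proof.
move=> /orP[/eqP a1 | /eqP b1] /orP[/eqP c1 | /eqP d1] [[|[|i]] hi] //;
  first [by exists ord0; rewrite mxE | by exists ord_max; rewrite mxE].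
Qed.

Fixpoint ce_counts n : nat * nat :=
  if n is m.+1 then
    let: (a, b) := ce_counts m in (b * a, a * (a + b))
  else (1, 1).

Lemma root_count_CE n :
  (root_count matrix_C matrix_E n ord0, root_count matrix_C matrix_E n ord_max) = ce_counts n.
Proof.
elim: n => [|n]; first by rewrite !root_count0.
rewrite !root_countS !sum_alph /= !mxE /=; case: (ce_counts n) => a b [-> ->].
by rewrite !mul0n !mul1n !add0n !addn0.
Qed.

Lemma root_count_CG n :
  (root_count matrix_C matrix_G n ord_max, root_count matrix_C matrix_G n ord0) = ce_counts n.
Proof.
elim: n => [|n]; first by rewrite !root_count0.
rewrite !root_countS !sum_alph /= !mxE /=; case: (ce_counts n) => a b [-> ->].
by rewrite !mul0n !mul1n !add0n !addn0 addnC.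
Qed.

Lemma pblocks_CE n : pblocks matrix_C matrix_E n = (ce_counts n).1 + (ce_counts n).2.
Proof.
rewrite pblocks_card_admissible; try exact: mx2_rows.
by rewrite (card_admissible matrix_C matrix_E n) -root_count_CE.
Qed.

Lemma pblocks_CG n : pblocks matrix_C matrix_G n = (ce_counts n).1 + (ce_counts n).2.
Proof.
rewrite pblocks_card_admissible; try exact: mx2_rows.
by rewrite (card_admissible matrix_C matrix_G n) -root_count_CG addnC.
Qed.

Lemma fibSS n : fib n.+2 = fib n.+1 + fib n.
Proof. by []. Qed.

Lemma fib_gt0 n : 0 < fib n.+1.
Proof.
suff : 0 < fib n.+1 /\ 0 < fib n.+2 by case.
by elim: n => [|n [h1 h2]] //; split => //; rewrite fibSS addn_gt0 h2.
Qed.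

Lemma fib_le_exp2 n : fib n.+1 <= 2 ^ n.
Proof.
suff : fib n.+1 <= 2 ^ n /\ fib n.+2 <= 2 ^ n.+1 by case.
elim: n => [|n [h1 h2]] //; split => //.
rewrite fibSS !expnS; rewrite expnS in h2; lia.
Qed.

Lemma fib_SS_bounds n : fib n.+1 <= fib n.+3 <= 3 * fib n.+1.
Proof.
have fib_le_S : fib n <= fib n.+1 by case: n => [|n] //; rewrite fibSS leq_addr.
rewrite !fibSS; lia.
Qed.

Lemma ce_counts_gt0 n : 0 < (ce_counts n).1 /\ 0 < (ce_counts n).2.
Proof.
elim: n => [|n] //=; case: (ce_counts n) => a b /= [a_gt0 b_gt0].
by rewrite !muln_gt0 addn_gt0 a_gt0 b_gt0.
Qed.

Lemma ce_counts_ratio n : fib n.+1 * (ce_counts n).2 = fib n.+2 * (ce_counts n).1.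
Proof.
elim: n => [|n] //; rewrite [fib n.+3]fibSS [ce_counts n.+1]/=.
by case: (ce_counts n) => a b /=; nia.
Qed.

Lemma ce_counts1S n :
  (ce_counts n.+1).1 * fib n.+1 = (ce_counts n).1 ^ 2 * fib n.+2.
Proof. by have /= := ce_counts_ratio n; case: (ce_counts n) => a b /=; nia. Qed.

Lemma ce_counts_sum n :
  ((ce_counts n).1 + (ce_counts n).2) * fib n.+1 = (ce_counts n).1 * fib n.+3.
Proof. by have := ce_counts_ratio n; rewrite [fib n.+3]fibSS; nia. Qed.

Lemma sum_exp2 n : \sum_(k < n.+1) 2 ^ k = (2 ^ n.+1).-1.
Proof. by rewrite predn_exp mul1n. Qed.

Local Open Scope ring_scope.
Local Open Scope classical_set_scope.

Section FibonacciSeries.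
Variable R : realType.

Definition ln_fib (k : nat) : R := ln (fib k)%:R.

Definition fib_series (N : nat) : R :=
  \sum_(2 <= n < N) ln ((fib n.+1)%:R : R) / 2 ^+ n.

Definition ln_ce_count (n : nat) : R := ln ((ce_counts n).1)%:R.

Lemma ln_natM (m k : nat) : (0 < m)%N -> (0 < k)%N ->
  ln ((m * k)%:R : R) = ln m%:R + ln k%:R.
Proof. by move=> m_gt0 k_gt0; rewrite natrM lnM // posrE ltr0n. Qed.

Lemma ln_fib_ge0 k : 0 <= ln_fib k.+1.
Proof. by rewrite ln_ge0 // ler1n fib_gt0. Qed.

Lemma ln_fib_le k : ln_fib k.+1 <= k%:R * ln 2.
Proof.
rewrite mulr_natl -lnXn // -natrX ler_ln ?posrE ?ltr0n ?fib_gt0 ?expn_gt0 //.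
by rewrite ler_nat fib_le_exp2.
Qed.

Lemma fib_seriesS N : fib_series N.+1 = fib_series N + ln_fib N.+1 / 2 ^+ N.
Proof.
case: N => [|[|N]]; last by rewrite /fib_series big_nat_recr.
all: by rewrite /fib_series !big_geq // /ln_fib ln1 mul0r addr0.
Qed.

Lemma ln_ce_countS n : ln_ce_count n.+1 + ln_fib n.+1 = 2 * ln_ce_count n + ln_fib n.+2.
Proof.
have [a_gt0 _] := ce_counts_gt0 n; have [a'_gt0 _] := ce_counts_gt0 n.+1.
rewrite /ln_ce_count /ln_fib -ln_natM ?fib_gt0 // ce_counts1S.
by rewrite ln_natM ?expn_gt0 ?a_gt0 ?fib_gt0 // expnS expn1 ln_natM // mulr2n mulrDl mul1r.
Qed.

Lemma ln_ce_counts_sum n :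
  ln (((ce_counts n).1 + (ce_counts n).2)%:R : R) + ln_fib n.+1 = ln_ce_count n + ln_fib n.+3.
Proof.
have [a_gt0 _] := ce_counts_gt0 n.
by rewrite /ln_ce_count /ln_fib -ln_natM ?fib_gt0 ?addn_gt0 ?a_gt0 // ce_counts_sum ln_natM ?fib_gt0.
Qed.

Lemma ln_ce_count_scaled n : ln_ce_count n / 2 ^+ n = fib_series n.+1 - fib_series n / 2.
Proof.
elim: n => [|n IH].
  by rewrite /ln_ce_count /fib_series !big_geq // ln1 !mul0r subr0.
have e2n : (2 ^+ n : R) != 0 by rewrite expf_neq0 // pnatr_eq0.
have -> : ln_ce_count n.+1 = 2 * ln_ce_count n + ln_fib n.+2 - ln_fib n.+1.
  by rewrite -ln_ce_countS addrK.
have -> : ln_ce_count n = 2 ^+ n * (fib_series n.+1 - fib_series n / 2).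
  by rewrite -IH mulrC divfK.
rewrite (fib_seriesS n.+1) (fib_seriesS n) exprS.
by field.
Qed.

Lemma fib_series_nondecreasing : nondecreasing_seq fib_series.
Proof.
by apply/nondecreasing_seqP => n; rewrite fib_seriesS lerDl divr_ge0 ?ln_fib_ge0.
Qed.

(* [sum_(n < N) n / 2^n = 2 - (2N + 2) / 2^N], and [ln Fib(n+1) <= n ln 2]. *)
Lemma fib_series_le_aux N : fib_series N <= 2 * ln 2 - (N.*2.+2)%:R * (ln 2 / 2 ^+ N).
Proof.
have ln2_ge0 : 0 <= ln (2 : R) by rewrite ln_ge0 // ler1n.
elim: N => [|N IH].
  by rewrite /fib_series big_geq // expr0 divr1 mulr2n mulrDl mul1r; lra.
rewrite fib_seriesS.
have exp2_gt0 : (0 : R) < 2 ^+ N by rewrite exprn_gt0.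
have term_le : ln_fib N.+1 / 2 ^+ N <= N%:R * (ln 2 / 2 ^+ N).
  by rewrite mulrA ler_pM2r ?invr_gt0 // ln_fib_le.
have -> : (N.+1.*2.+2)%:R * (ln (2:R) / 2 ^+ N.+1) =
          (N.*2.+2)%:R * (ln (2:R) / 2 ^+ N) - N%:R * (ln (2:R) / 2 ^+ N).
  rewrite exprS -!muln2 (_ : (N.+1 * 2).+2 = N * 2 + 4)%N; last by lia.
  rewrite (_ : (N * 2).+2 = N * 2 + 2)%N; last by lia.
  by rewrite !natrD !natrM; field; rewrite lt0r_neq0.
lra.
Qed.

Lemma fib_series_le N : fib_series N <= 2 * ln 2.
Proof.
apply: le_trans (fib_series_le_aux N) _; rewrite lerBlDr lerDl mulr_ge0 //.
by rewrite divr_ge0 ?exprn_ge0 // ln_ge0 // ler1n.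
Qed.

Lemma fib_series_cvg : fib_series @ \oo --> sup (range fib_series).
Proof.
apply: nondecreasing_cvgn; first exact: fib_series_nondecreasing.
by exists (2 * ln 2) => _ [n _ <-]; apply: fib_series_le.
Qed.

End FibonacciSeries.

Section BlockEntropy.
Variable R : realType.

Definition delta_card (n : nat) : R := ((\sum_(k < n.+1) 2 ^ k)%N)%:R.

Lemma delta_cardE n : delta_card n = 2 ^+ n.+1 - 1.
Proof.
rewrite /delta_card sum_exp2 -natrX -[in RHS](prednK (expn_gt0 2 n.+1)).
by rewrite -natr1 addrK.
Qed.

Lemma exp2_le_delta_card n : 2 ^+ n <= delta_card n.
Proof.
have : (1 : R) <= 2 ^+ n by rewrite exprn_ege1 // ler1n.
rewrite delta_cardE exprS; lra.
Qed.

Lemma delta_card_gt0 n : 0 < delta_card n.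
Proof. exact: lt_le_trans (exprn_gt0 _ _) (exp2_le_delta_card n). Qed.

Lemma inv_delta_card_cvg : (fun n => (delta_card n)^-1) @ \oo --> 0.
Proof.
apply: (@squeeze_cvgr _ _ _ _ (cst 0) (GRing.exp (2^-1 : R))); last 2 first.
- exact: cvg_cst.
- by apply: cvg_expr; rewrite ger0_norm ?invr_ge0 // invf_lt1 // ltr1n.
apply: nearW => n; rewrite /= invr_ge0 (ltW (delta_card_gt0 n)) /= exprVn.
by rewrite lef_pV2 ?posrE ?delta_card_gt0 ?exprn_gt0 // exp2_le_delta_card.
Qed.

Lemma exp2_div_delta_card_cvg : (fun n => 2 ^+ n / delta_card n) @ \oo --> (2^-1 : R).
Proof.
have -> : (fun n => 2 ^+ n / delta_card n) = (fun n => 2^-1 + (delta_card n)^-1 * 2^-1).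
  apply: funext => n; have := lt0r_neq0 (delta_card_gt0 n).
  by rewrite delta_cardE exprS => D_neq0; field.
rewrite -[X in _ --> X]addr0 -[X in _ + X](mul0r 2^-1).
apply: cvgD; [exact: cvg_cst | exact: cvgMr_tmp inv_delta_card_cvg].
Qed.

Lemma ln_fib_diff_div_delta_card_cvg :
  (fun n => (ln_fib R n.+3 - ln_fib R n.+1) / delta_card n) @ \oo --> 0.
Proof.
apply: (@squeeze_cvgr _ _ _ _ (cst 0) (fun n => ln 3 * (delta_card n)^-1)); last 2 first.
- exact: cvg_cst.
- by rewrite -(mulr0 (ln 3)); apply: cvgMl_tmp inv_delta_card_cvg.
apply: nearW => n; have /andP[fib_le fib_le3] := fib_SS_bounds n.
have D_gt0 := delta_card_gt0 n.
rewrite /= divr_ge0 ?(ltW D_gt0) ?subr_ge0 ?ler_ln ?posrE ?ltr0n ?fib_gt0 ?ler_nat //=.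
rewrite ler_pM2r ?invr_gt0 // lerBlDr /ln_fib -ln_natM ?fib_gt0 //.
by rewrite ler_ln ?posrE ?ltr0n ?muln_gt0 ?fib_gt0 // ler_nat.
Qed.

End BlockEntropy.

Section CeCountEntropy.
Variables (R : realType) (P Q : 'M[nat]_2).
Hypothesis pblocks_ce : forall n, pblocks P Q n = ((ce_counts n).1 + (ce_counts n).2)%N.

Lemma hPS_seq_ce n : hPS_seq R P Q n =
  2 ^+ n / delta_card R n * (fib_series R n.+1 - fib_series R n / 2)
  + (ln_fib R n.+3 - ln_fib R n.+1) / delta_card R n.
Proof.
rewrite /hPS_seq pblocks_ce -/(delta_card R n) -ln_ce_count_scaled.
have -> : ln (((ce_counts n).1 + (ce_counts n).2)%:R : R) =
          ln_ce_count R n + ln_fib R n.+3 - ln_fib R n.+1.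
  by rewrite -ln_ce_counts_sum addrK.
have exp2_neq0 : (2 ^+ n : R) != 0 by rewrite expf_neq0 // pnatr_eq0.
by field; rewrite exp2_neq0 lt0r_neq0 ?delta_card_gt0.
Qed.

Lemma hPS_seq_ce_cvg (L : R) : fib_series R @ \oo --> L -> hPS_seq R P Q @ \oo --> L / 4.
Proof.
move=> series_cvg; rewrite (funext hPS_seq_ce).
have -> : L / 4 = 2^-1 * (L - L / 2) + 0 by field.
apply: cvgD; last exact: ln_fib_diff_div_delta_card_cvg.
apply: cvgM; first exact: exp2_div_delta_card_cvg.
apply: cvgB; first by rewrite (cvg_shiftS (fib_series R)).
exact: cvgMr_tmp series_cvg.
Qed.

End CeCountEntropy.

Theorem mainTheorem18 (R : realType) :
  exists L : R,
    (fun N : nat => \sum_(2 <= n < N) ln ((fib n.+1)%:R : R) / 2 ^+ n) @ \oo --> L /\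
    hPS_seq R matrix_C matrix_E @ \oo --> L / 4 /\
    hPS_seq R matrix_C matrix_G @ \oo --> L / 4.
Proof.
have series_cvg := @fib_series_cvg R.
exists (sup (range (fib_series R))); split; first exact: series_cvg.
by split; apply: hPS_seq_ce_cvg series_cvg; [exact: pblocks_CE | exact: pblocks_CG].
Qed.
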